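(* Let $X$ be a real Banach space, $F$ a non-empty closed bounded subset of $X$, and $x\in X$ with $Q_F(x)\neq\emptyset$. The following are equivalent. (1) Every maximizing sequence in $F$ for $x$ converges. (2) $\mathrm{diam}(Q_F(x,\frac1n))\to0$. (3) $Q_F(x)$ is a singleton and $Q_F(x,\frac1n)\xrightarrow{V}Q_F(x)$. (4) $Q_F(x)$ is a singleton and $Q_F(x,\frac1n)\xrightarrow{H}Q_F(x)$. (5) $F$ is SUR at $x$.
   Context: $B_X$ is the closed unit ball. $r(F,x)=\sup_{y\in F}\|x-y\|$, $Q_F(x,\delta)=\{y\in F:\|x-y\|\ge r(F,x)-\delta\}$ for $\delta\ge0$, $Q_F(x)=Q_F(x,0)$. A maximizing sequence in $F$ for $x$ is a sequence $(y_n)$ in $F$ with $\|x-y_n\|\to r(F,x)$. $F$ is SUR at $x$ if $Q_F(x)$ is a singleton and for every $\epsilon>0$ there is $\delta>0$ with $Q_F(x,\delta)\subseteq Q_F(x)+\epsilon B_X$. For closed bounded sets $C_n,C_0$: $C_n\xrightarrow{V}C_0$ means both (a) for every open $U\supseteq C_0$, eventually $C_n\subseteq U$, and (b) for every open $U$ with $C_0\cap U\ne\emptyset$, eventually $C_n\cap U\neq\emptyset$; $C_n\xrightarrow{H}C_0$ means for every $\epsilon>0$, eventually $C_n\subseteq C_0+\epsilon B_X$ and $C_0\subseteq C_n+\epsilon B_X$. *)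

From HB Require Import structures.
From mathcomp Require Import all_boot all_order all_algebra.
From mathcomp Require Import all_classical all_reals all_analysis.
Set Implicit Arguments. Unset Strict Implicit. Unset Printing Implicit Defensive.
Import Order.TTheory GRing.Theory Num.Theory.
Import numFieldNormedType.Exports.
Local Open Scope classical_set_scope.
Local Open Scope ring_scope.

Section Defs.
Context {R : realType} {X : normedModType R}.

Definition farthest_rad (F : set X) (x : X) : R :=
  sup [set `|x - y| | y in F].

Definition Qset (F : set X) (x : X) (delta : R) : set X :=
  [set y | F y /\ farthest_rad F x - delta <= `|x - y|].

Definition Q0 (F : set X) (x : X) : set X := Qset F x 0.

Definition maximizing_seq (F : set X) (x : X) (y : nat -> X) : Prop :=
  (forall n, F (y n)) /\ (fun n => `|x - y n|) @ \oo --> farthest_rad F x.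

Definition diam (A : set X) : R :=
  sup [set `|a - b| | a in A & b in A].

Definition enlarge (A : set X) (eps : R) : set X :=
  [set z | exists2 a, A a & `|z - a| <= eps].

Definition is_singleton (A : set X) : Prop := exists y, A = [set y].

Definition V_conv (C : nat -> set X) (C0 : set X) : Prop :=
  (forall U : set X, open U -> C0 `<=` U -> \forall n \near \oo, C n `<=` U) /\
  (forall U : set X, open U -> C0 `&` U !=set0 ->
     \forall n \near \oo, C n `&` U !=set0).

Definition H_conv (C : nat -> set X) (C0 : set X) : Prop :=
  forall eps : R, 0 < eps -> \forall n \near \oo,
    C n `<=` enlarge C0 eps /\ C0 `<=` enlarge (C n) eps.

Definition SUR (F : set X) (x : X) : Prop :=
  is_singleton (Q0 F x) /\
  forall eps : R, 0 < eps -> exists2 delta : R, 0 < delta &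
    Qset F x delta `<=` enlarge (Q0 F x) eps.

End Defs.

(* (1) => (2): if the diameters of Q_F(x, 1/n) stayed above e > 0, one could
   pick a_n, b_n in Q_F(x, 1/n) with |a_n - b_n| > e.  Both sequences are
   maximizing, hence so is their interleaving a_0, b_0, a_1, b_1, ..., whose
   convergence forces a_n - b_n -> 0.
   (2) => (3), (4): a point q of Q_F(x) lies in every Q_F(x, 1/n), so the
   shrinking diameters make Q_F(x) = {q} the Hausdorff limit; for a singleton
   limit Vietoris and Hausdorff convergence coincide.
   (4) => (5) is immediate, and (5) => (1) because a maximizing sequence
   eventually enters every Q_F(x, d). *)

From HB Require Import structures.
From mathcomp Require Import all_boot all_order all_algebra.
From mathcomp Require Import all_classical all_reals all_analysis.
Set Implicit Arguments. Unset Strict Implicit. Unset Printing Implicit Defensive.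
Import Order.TTheory GRing.Theory Num.Theory.
Import numFieldNormedType.Exports.
Local Open Scope classical_set_scope.
Local Open Scope ring_scope.

Section interleave.
Context {T : Type}.

Definition interleave (u v : nat -> T) (m : nat) : T :=
  if odd m then v m./2 else u m./2.

Lemma interleave_double u v n : interleave u v n.*2 = u n.
Proof. by rewrite /interleave odd_double doubleK. Qed.

Lemma interleave_doubleS u v n : interleave u v n.*2.+1 = v n.
Proof. by rewrite /interleave /= odd_double uphalf_double. Qed.

End interleave.

Lemma cvg_interleaveP {T : topologicalType} (u v : nat -> T) (l : T) :
  interleave u v @ \oo --> l <-> u @ \oo --> l /\ v @ \oo --> l.
Proof.
split=> [zl|[ul vl]].
  have interleave_even : interleave u v \o muln 2 = u.
    by apply/funext => n; rewrite /= mul2n interleave_double.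
  have interleave_odd : interleave u v \o (S \o muln 2) = v.
    by apply/funext => n; rewrite /= mul2n interleave_doubleS.
  split; first by rewrite -interleave_even; exact: cvg_comp _ _ (@cvg_mulnl 2 isT) zl.
  rewrite -interleave_odd; apply: cvg_comp _ _ _ zl.
  exact: cvg_comp _ _ (@cvg_mulnl 2 isT) (cvg_addnl 1).
have half_oo : half @ \oo --> \oo.
  by rewrite (_ : half = divn^~ 2); [exact: cvg_divnr | apply/funext => m; rewrite divn2].
move=> A lA.
have uA := cvg_comp _ _ half_oo ul _ lA; have vA := cvg_comp _ _ half_oo vl _ lA.
suff : \forall m \near \oo, A (interleave u v m) by [].
near=> m; rewrite /interleave; case: (odd m); near: m; [exact: vA | exact: uA].
Unshelve. all: end_near. Qed.

Section diameter.
Context {R : realType} {X : normedModType R}.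

Lemma dist_le_diam (A : set X) (M : R) a b :
  (forall c, A c -> `|c| <= M) -> A a -> A b -> `|a - b| <= diam A.
Proof.
move=> AM Aa Ab; apply: sup_upper_bound; last by exists a => //; exists b.
split; first by exists `|a - b|; exists a => //; exists b.
exists (M + M) => _ [c Ac [d Ad <-]].
by apply: le_trans (ler_normB _ _) _; apply: lerD; apply: AM.
Qed.

Lemma diam_le (A : set X) (e : R) : A !=set0 ->
  (forall a b, A a -> A b -> `|a - b| <= e) -> diam A <= e.
Proof.
move=> [a Aa] Ae; apply: ge_sup; first by exists `|a - a|; exists a => //; exists a.
by move=> _ [b Ab [c Ac <-]]; apply: Ae.
Qed.

Lemma diam_cvg0P (C : nat -> set X) (M : R) :
  (forall n, C n !=set0) -> (forall n c, C n c -> `|c| <= M) ->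
  diam (C n) @[n --> \oo] --> 0 <->
  forall e, 0 < e -> \forall n \near \oo,
    forall a b, C n a -> C n b -> `|a - b| <= e.
Proof.
move=> C0 CM; split=> [/cvgrPdist_le dC e e0|Ce].
  apply: filterS (dC e e0) => n; rewrite sub0r normrN => de a b Ca Cb.
  exact: le_trans (dist_le_diam (CM n) Ca Cb) (le_trans (ler_norm _) de).
apply/cvgrPdist_le => e e0; apply: filterS (Ce e e0) => n Cne.
have [c Cc] := C0 n.
have diam_ge0 : 0 <= diam (C n).
  exact: le_trans (normr_ge0 (c - c)) (dist_le_diam (CM n) Cc Cc).
by rewrite sub0r normrN ger0_norm //; apply: diam_le.
Qed.

Lemma diam_cvg0_eq (C : nat -> set X) (M : R) a b :
  (forall n c, C n c -> `|c| <= M) -> (forall n, C n a) -> (forall n, C n b) ->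
  diam (C n) @[n --> \oo] --> 0 -> a = b.
Proof.
move=> CM Ca Cb /(diam_cvg0P (fun n => ex_intro _ a (Ca n)) CM) small.
apply/eqP; rewrite -subr_eq0 -normr_le0; apply/ler_addgt0Pr => e e0.
by rewrite add0r; have [N _ /(_ N (leqnn N))] := small e e0; apply.
Qed.

Lemma diam_cvg0_H_conv (C : nat -> set X) (M : R) q :
  (forall n c, C n c -> `|c| <= M) -> (forall n, C n q) ->
  diam (C n) @[n --> \oo] --> 0 -> H_conv C [set q].
Proof.
move=> CM Cq /(diam_cvg0P (fun n => ex_intro _ q (Cq n)) CM) small e e0.
apply: filterS (small e e0) => n Cn_small; split=> [p Cp|_ ->].
  by exists q => //; apply: Cn_small.
by exists q => //; rewrite subrr normr0 ltW.
Qed.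

End diameter.

Section singleton_limit.
Context {R : realType} {X : normedModType R}.
Variables (C : nat -> set X) (q : X).

Lemma enlarge_set1E (e : R) : enlarge [set q] e = [set p | `|q - p| <= e].
Proof.
apply/seteqP; split=> [p [_ -> /=]|p qp]; first by rewrite distrC.
by exists q => //; rewrite distrC.
Qed.

Lemma V_conv_singletonE : V_conv C [set q] <-> H_conv C [set q].
Proof.
split=> [[Vup Vlow] e e0|H].
  have qe : [set q] `&` ball q e !=set0 by exists q; split => //; exact: ballxx.
  have qball : [set q] `<=` ball q e by move=> _ ->; exact: ballxx.
  apply: filterS2 (Vup _ (ball_open q e) qball) (Vlow _ (ball_open q e) qe).
  move=> n Cq [a [Ca]]; rewrite -ball_normE /= => /ltW qa.
  rewrite enlarge_set1E; split=> [p /Cq|_ ->]; last by exists a.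
  by rewrite -ball_normE /= => /ltW.
have qU U : open U -> U q -> exists2 r : R, 0 < r & [set p | `|q - p| <= r] `<=` U.
  move=> oU Uq; have /nbhs_closedballP[r qrU] : nbhs q U by exact: open_nbhs_nbhs.
  by exists r%:num => // p qp; apply: qrU; rewrite closed_ballE.
split=> [U oU /(_ q erefl) Uq|U oU [_ [-> Uq]]]; have [r r0 qrU] := qU U oU Uq.
  by apply: filterS (H r r0) => n [+ _]; rewrite enlarge_set1E => Cq p /Cq/qrU.
apply: filterS (H r r0) => n [_ /(_ q erefl)[a Ca qa]].
by exists a; split => //; exact: qrU.
Qed.

End singleton_limit.

Section farthest_points.
Context {R : realType} {X : normedModType R}.
Variables (F : set X) (x : X).

Lemma Qset_sub d : Qset F x d `<=` F.
Proof. by move=> y []. Qed.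

Lemma subset_Qset d1 d2 : d1 <= d2 -> Qset F x d1 `<=` Qset F x d2.
Proof. by move=> d12 y [Fy le]; split => //; apply: le_trans le; rewrite lerB. Qed.

Lemma Q0_subset_Qset d : 0 <= d -> Q0 F x `<=` Qset F x d.
Proof. exact: subset_Qset. Qed.

Lemma maximizing_seq_near_Qset (y : nat -> X) d : maximizing_seq F x y -> 0 < d ->
  \forall n \near \oo, Qset F x d (y n).
Proof.
move=> [Fy /cvgrPdist_lt /(_ d)] yd d0; apply: filterS (yd d0) => n rd; split => //.
by rewrite lerBlDl -lerBlDr ltW // (le_lt_trans (ler_norm _) rd).
Qed.

Lemma maximizing_seq_interleave (u v : nat -> X) :
  maximizing_seq F x u -> maximizing_seq F x v ->
  maximizing_seq F x (interleave u v).
Proof.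
move=> [Fu ur] [Fv vr]; split=> [m|]; first by rewrite /interleave; case: odd.
have -> : (fun m => `|x - interleave u v m|) =
          interleave (fun n => `|x - u n|) (fun n => `|x - v n|).
  by apply/funext => m; rewrite /interleave; case: odd.
exact/cvg_interleaveP.
Qed.

Lemma maximizing_seq_sub_cvg0 (u v : nat -> X) :
  (forall y, maximizing_seq F x y -> cvg (y @ \oo)) ->
  maximizing_seq F x u -> maximizing_seq F x v ->
  (fun n => u n - v n) @ \oo --> 0.
Proof.
move=> cvg_max uM vM.
have /cvg_ex[l /cvg_interleaveP[ul vl]] := cvg_max _ (maximizing_seq_interleave uM vM).
by rewrite -(subrr l); apply: cvgB.
Qed.

Lemma H_conv_Qset_SUR : is_singleton (Q0 F x) ->
  H_conv (fun n => Qset F x (n.+1%:R)^-1) (Q0 F x) -> SUR F x.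
Proof.
move=> Q0_single QH; split => // e e0.
by have [N _ /(_ N (leqnn N))[QN _]] := QH e e0; exists (N.+1%:R)^-1.
Qed.

Lemma SUR_maximizing_seq_cvg (y : nat -> X) :
  SUR F x -> maximizing_seq F x y -> cvg (y @ \oo).
Proof.
move=> [[q Q0E] SUR_x] yM; apply: (cvgP q); apply/cvgrPdist_le => e e0.
have [d d0 Qd] := SUR_x e e0.
apply: filterS (maximizing_seq_near_Qset yM d0) => n /Qd[a].
by rewrite Q0E => -> ; rewrite distrC.
Qed.

Variable M : R.
Hypothesis FM : forall y, F y -> `|y| <= M.

Lemma dist_le_farthest_rad y : F y -> `|x - y| <= farthest_rad F x.
Proof.
move=> Fy; apply: sup_upper_bound; last by exists y.
split; first by exists `|x - y|; exists y.
exists (`|x| + M) => _ [z Fz <-].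
by apply: le_trans (ler_normB _ _) _; rewrite lerD2l FM.
Qed.

Lemma maximizing_seq_Qset (y : nat -> X) (d : nat -> R) :
  (forall n, Qset F x (d n) (y n)) -> d @ \oo --> 0 -> maximizing_seq F x y.
Proof.
move=> yQ d0; split=> [n|]; first by have [] := yQ n.
apply: (@squeeze_cvgr _ _ _ _ (fun n => farthest_rad F x - d n) (fun=> farthest_rad F x)).
- by apply: nearW => n; have [Fy le] := yQ n; rewrite le dist_le_farthest_rad.
- by rewrite -[X in _ --> X]subr0; apply: cvgB => //; exact: cvg_cst.
- exact: cvg_cst.
Qed.

Lemma maximizing_cvg_diam_Qset_cvg0 q : Q0 F x q ->
  (forall y, maximizing_seq F x y -> cvg (y @ \oo)) ->
  diam (Qset F x (n.+1%:R)^-1) @[n --> \oo] --> 0.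
Proof.
move=> Q0q cvg_max.
have Qq n : Qset F x (n.+1%:R)^-1 q by apply: Q0_subset_Qset.
have QM n c : Qset F x (n.+1%:R)^-1 c -> `|c| <= M by move/Qset_sub/FM.
apply/(diam_cvg0P (fun n => ex_intro _ q (Qq n)) QM) => e e0.
apply: contrapT => far.
have far_pair N : exists uv : X * X, [/\ Qset F x (N.+1%:R)^-1 uv.1,
    Qset F x (N.+1%:R)^-1 uv.2 & e < `|uv.1 - uv.2|].
  have /existsNP[n /not_implyP[Nn]] : ~ forall n, (N <= n)%N ->
      forall a b, Qset F x (n.+1%:R)^-1 a -> Qset F x (n.+1%:R)^-1 b -> `|a - b| <= e.
    by move=> small; apply: far; exists N.
  move=> /existsNP[a /existsNP[b /not_implyP[Qa /not_implyP[Qb /negP]]]].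
  rewrite -ltNge => ab.
  have QnN : Qset F x (n.+1%:R)^-1 `<=` Qset F x (N.+1%:R)^-1.
    by apply: subset_Qset; rewrite lef_pV2 ?posrE // ler_nat ltnS.
  by exists (a, b); split => //; apply: QnN.
have [uv uvP] := choice far_pair; have [Qu Qv uv_far] := all_and3 uvP.
have uM := maximizing_seq_Qset Qu cvg_harmonic.
have vM := maximizing_seq_Qset Qv cvg_harmonic.
have /cvgrPdist_lt/(_ e e0)[N _ /(_ N (leqnn N))] :=
  maximizing_seq_sub_cvg0 cvg_max uM vM.
by rewrite sub0r normrN => /lt_trans/(_ (uv_far N)); rewrite ltxx.
Qed.

End farthest_points.

Theorem theorem2p6 (R : realType) (X : completeNormedModType R)
  (F : set X) (x : X) :
  F !=set0 -> closed F -> (exists M : R, forall y, F y -> `|y| <= M) ->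
  Q0 F x !=set0 ->
  [<-> (forall y : nat -> X, maximizing_seq F x y -> cvg (y @ \oo));
       (fun n : nat => diam (Qset F x (n.+1%:R)^-1)) @ \oo --> (0 : R);
       is_singleton (Q0 F x) /\ V_conv (fun n : nat => Qset F x (n.+1%:R)^-1) (Q0 F x);
       is_singleton (Q0 F x) /\ H_conv (fun n : nat => Qset F x (n.+1%:R)^-1) (Q0 F x);
       SUR F x].
Proof.
move=> _ _ [M FM] [q Q0q].
have Qq n : Qset F x (n.+1%:R)^-1 q by apply: Q0_subset_Qset.
have QM n c : Qset F x (n.+1%:R)^-1 c -> `|c| <= M by move/Qset_sub/FM.
tfae.
- exact: (maximizing_cvg_diam_Qset_cvg0 FM Q0q).
- move=> diam_cvg0.
  have Q0E : Q0 F x = [set q].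
    apply/seteqP; split=> [p Q0p|_ ->//]; apply: diam_cvg0_eq QM _ Qq diam_cvg0.
    by move=> n; apply: Q0_subset_Qset.
  rewrite Q0E V_conv_singletonE; split; first by exists q.
  exact: diam_cvg0_H_conv QM Qq diam_cvg0.
- by case=> -[p ->] /V_conv_singletonE; split => //; exists p.
- by case; exact: H_conv_Qset_SUR.
- by move=> SUR_x y; exact: SUR_maximizing_seq_cvg.
Qed.
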